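(* For every positive integer $N$ there exist a connected simple graph $G$ and a vertex $v\in V(G)$ which is not a cut vertex of $G$ such that $|\chi_{dom}(G)-\chi_{dom}(G-v)|\geq N$. (For instance, $G$ a wheel $W_n$ with $n$ large and $v$ its center, so that $G-v$ is the cycle $C_n$.)
   Context: All graphs are finite and simple. A dominated coloring of a graph $H$ is a proper vertex coloring of $H$ such that for every color class $C$ there is a vertex $x\in V(H)$ adjacent to every vertex of $C$. The dominated chromatic number $\chi_{dom}(H)$ is the minimum number of colors in a dominated coloring of $H$. $G-v$ denotes the graph obtained from $G$ by deleting $v$ and all edges incident with $v$. The wheel $W_n$ is the graph obtained from the cycle $C_n$ by adding one new vertex (the center) adjacent to all vertices of the cycle. *)

From mathcomp Require Import all_boot.
Set Implicit Arguments. Unset Strict Implicit. Unset Printing Implicit Defensive.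

Definition simple_graph (T : finType) (e : rel T) : Prop :=
  symmetric e /\ irreflexive e.

Definition connected_graph (T : finType) (e : rel T) : Prop :=
  forall x y : T, connect e x y.

Definition del_vertex (T : finType) (e : rel T) (v : T)
  : rel {x : T | x != v} :=
  fun a b => e (val a) (val b).
Arguments del_vertex {T} e v.

(* v is a cut vertex: deleting it disconnects two vertices that were
   connected in G (i.e. G - v has more components than G). *)
Definition cut_vertex (T : finType) (e : rel T) (v : T) : Prop :=
  exists a b : {x : T | x != v},
    connect e (val a) (val b) /\ ~~ connect (del_vertex e v) a b.

Definition dominated_coloring (T : finType) (e : rel T) (k : nat)
    (c : T -> 'I_k) : Prop :=
  (forall x y, e x y -> c x != c y) /\
  (forall y, exists x, forall z, c z = c y -> e x z).

Definition is_chi_dom (T : finType) (e : rel T) (m : nat) : Prop :=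
  (exists c : T -> 'I_m, dominated_coloring e c) /\
  (forall k (c : T -> 'I_k), dominated_coloring e c -> m <= k).

From mathcomp Require Import all_boot zify.
From Stdlib Require Import Classical.
Set Implicit Arguments. Unset Strict Implicit. Unset Printing Implicit Defensive.

(* Every color class of a dominated coloring lies in the neighbourhood of a
   single vertex, so a graph of maximum degree [D] on [n] vertices needs at
   least [n / D] colors.  Instead of the wheel take the fan, the center joined
   to a path on [2N + 6] vertices.  Coloring the center alone and the path
   alternately with two more colors is a dominated 3-coloring, the center
   dominating both path classes.  Deleting the center leaves the path, which is
   connected (so the center is no cut vertex) and of maximum degree 2, hence
   needs at least [N + 3] colors. *)

Section SimpleGraphs.
Variables (T : finType) (e : rel T).

Lemma dominated_coloring_chi_dom k (c : T -> 'I_k) :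
  dominated_coloring e c -> exists2 m, is_chi_dom e m & m <= k.
Proof.
elim/ltn_ind: k c => k IHk c c_dom.
have [[k' [c' [lt_k'k c'_dom]]] | no_fewer] :=
  classic (exists k' (c' : T -> 'I_k'), k' < k /\ dominated_coloring e c').
  have [m chi_m le_mk'] := IHk k' lt_k'k c' c'_dom.
  by exists m; last exact: leq_trans le_mk' (ltnW lt_k'k).
exists k => //; split; first by exists c.
move=> k' c' c'_dom; rewrite leqNgt; apply/negP => lt_k'k.
by apply: no_fewer; exists k', c'.
Qed.

Lemma card_le_dominated_coloring D k (c : T -> 'I_k) :
  (forall x, #|[pred z | e x z]| <= D) -> dominated_coloring e c ->
  #|T| <= k * D.
Proof.
move=> deg_le [_ c_dom].
have -> : #|T| = \sum_(i < k) #|[pred z | c z == i]|.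
  rewrite -sum1_card (partition_big c xpredT) //=.
  by apply: eq_bigr => i _; rewrite sum1_card.
rewrite -[k in k * D]card_ord -sum_nat_const; apply: leq_sum => i _.
case: (pickP [pred z | c z == i]) => [y /eqP cy | class_i0]; last first.
  by rewrite (eq_card0 class_i0).
have [x x_dom] := c_dom y; apply: leq_trans (deg_le x).
by apply: subset_leq_card; apply/subsetP => z /eqP cz; apply: x_dom; rewrite cz cy.
Qed.

Lemma enum_rank_dominated :
  irreflexive e -> (forall y, exists x, e x y) -> dominated_coloring e (@enum_rank T).
Proof.
move=> e_irr has_nbr; split.
  move=> x y exy; rewrite (inj_eq enum_rank_inj).
  by apply: contraTneq exy => ->; rewrite e_irr.
move=> y; have [x exy] := has_nbr y.
by exists x => z /enum_rank_inj ->.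
Qed.

Lemma connected_by_descent (f : T -> nat) (r : T) : symmetric e ->
  (forall x, x != r -> exists2 y, e x y & f y < f x) -> connected_graph e.
Proof.
move=> e_sym descent.
have to_r x : connect e x r.
  move: (ltnSn (f x)); move: {2}(f x).+1 => n.
  elim: n x => // n IHn x lt_fx_n.
  have [-> // | x_r] := eqVneq x r.
  have [y exy lt_fyx] := descent x x_r.
  exact: connect_trans (connect1 exy) (IHn y (leq_trans lt_fyx lt_fx_n)).
move=> x y; apply: connect_trans (to_r x) _.
by rewrite (sym_connect_sym e_sym); apply: to_r.
Qed.

Lemma simple_graph_del_vertex v : simple_graph e -> simple_graph (del_vertex e v).
Proof.
by move=> [e_sym e_irr]; split=> [a b | a]; rewrite /del_vertex; [apply: e_sym | apply: e_irr].
Qed.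

Lemma not_cut_vertex_of_connected v :
  connected_graph (del_vertex e v) -> ~ cut_vertex e v.
Proof. by move=> conn [a [b [_ /negP]]]; apply. Qed.

End SimpleGraphs.

Lemma card_le_size_of_injective (T : finType) (U : eqType) (A : pred T)
    (f : T -> U) (s : seq U) :
  injective f -> (forall z, A z -> f z \in s) -> #|A| <= size s.
Proof.
move=> f_inj f_in_s; rewrite cardE -(size_map f); apply: uniq_leq_size.
  by rewrite map_inj_uniq ?enum_uniq.
by move=> _ /mapP [z z_A ->]; apply: f_in_s; rewrite mem_enum in z_A.
Qed.

Definition path_adj (i j : nat) : bool := (i.+1 == j) || (j.+1 == i).

Definition fan n : rel 'I_n := fun x y =>
  [|| (val x == 0) && (val y != 0), (val y == 0) && (val x != 0) | path_adj x y].

Lemma fan_simple n : simple_graph (@fan n).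
Proof.
split=> [x y | x]; rewrite /fan.
  by rewrite orbCA; do 2 congr orb; apply: orbC.
by rewrite !andbN /path_adj orbb eqn_leq ltnn.
Qed.

Lemma fan_connected p : connected_graph (@fan p.+1).
Proof.
apply: (connected_by_descent (f := val) (r := ord0)); first by case: (fan_simple p.+1).
move=> x x_0; exists ord0; last by rewrite lt0n.
by rewrite /fan /= orbC /= x_0.
Qed.

Definition fan_color n (x : 'I_n) : 'I_3 :=
  if val x == 0 then @Ordinal 3 0 isT
  else if odd x then @Ordinal 3 1 isT else @Ordinal 3 2 isT.

Lemma fan_color_dominated p : dominated_coloring (@fan p.+2) (@fan_color p.+2).
Proof.
split.
  move=> [x lt_x] [y lt_y]; rewrite /fan /fan_color /path_adj /=.
  case: x lt_x => [|x] _; case: y lt_y => [|y] _ //=; try by case: ifP.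
  by rewrite !eqSS => /orP[] /eqP <-; rewrite /= negbK; case: (odd _).
move=> y; case: (eqVneq (val y) 0) => [y_0 | y_n0].
  exists (@Ordinal p.+2 1 isT) => z; rewrite /fan_color y_0 /=.
  case: ifP => [z_0 _ | _]; first by rewrite /fan z_0.
  by case: ifP.
exists ord0 => z; rewrite /fan_color (negbTE y_n0) /fan /=.
by case: ifP => [_ | z_n0]; first by case: ifP.
Qed.

Section FanWithoutCenter.
Variable p : nat.
Let V := {x : 'I_p.+2 | x != ord0}.
Let path := del_vertex (@fan p.+2) ord0.
Let label (a : V) : nat := val (val a).

Definition path_vertex i (lt_i : i.+1 < p.+2) : V := exist _ (Ordinal lt_i) isT.

Lemma label_path_vertex i (lt_i : i.+1 < p.+2) : label (path_vertex lt_i) = i.+1.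
Proof. by []. Qed.

Lemma label_gt0 (a : V) : 0 < label a.
Proof. by case: a => x x_0; rewrite /label /= lt0n; move: x_0; rewrite -val_eqE. Qed.

Lemma label_inj : injective label.
Proof. by move=> a b /val_inj /val_inj. Qed.

Lemma path_adjE (a b : V) : path a b = path_adj (label a) (label b).
Proof.
rewrite /path /del_vertex /fan -/(label a) -/(label b).
by rewrite !eqn0Ngt !label_gt0.
Qed.

Lemma path_sym : symmetric path.
Proof. by case: (simple_graph_del_vertex ord0 (fan_simple p.+2)). Qed.

Lemma path_pred (a : V) : 1 < label a -> exists2 b, path a b & label b < label a.
Proof.
move=> a_gt1; have lt_a : (label a).-2.+1 < p.+2.
  by have := ltn_ord (val a); rewrite -/(label a); lia.
exists (path_vertex lt_a); rewrite ?path_adjE label_path_vertex; last by lia.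
by rewrite /path_adj; apply/orP; right; apply/eqP; lia.
Qed.

Lemma path_connected : connected_graph path.
Proof.
apply: (connected_by_descent (f := label) (r := @path_vertex 0 isT) path_sym).
move=> a a_1; apply: path_pred.
have a_n1 : label a != 1 by apply: contra a_1 => /eqP a_1; apply/eqP/label_inj.
by have := label_gt0 a; lia.
Qed.

Lemma path_has_neighbor : 0 < p -> forall b : V, exists a, path a b.
Proof.
move=> p_gt0 b; have [b_1 | b_n1] := eqVneq (label b) 1.
  have lt_2 : 2 < p.+2 by rewrite ltnS.
  by exists (path_vertex lt_2); rewrite path_adjE label_path_vertex b_1.
have [a ba _] : exists2 a, path b a & label a < label b.
  by apply: path_pred; have := label_gt0 b; lia.
by exists a; rewrite path_sym.
Qed.

Lemma path_degree_le2 (a : V) : #|[pred b | path a b]| <= 2.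
Proof.
apply: (card_le_size_of_injective label_inj (s := [:: (label a).+1; (label a).-1])).
move=> b; rewrite /= path_adjE /path_adj !inE.
by case/orP=> /eqP <-; rewrite ?eqxx ?orbT.
Qed.

Lemma card_path : #|{: V}| = p.+1.
Proof. by rewrite card_sig cardC1 card_ord. Qed.
End FanWithoutCenter.

Theorem theorem2p3 (N : nat) (hN : 0 < N) :
  exists (n : nat) (e : rel 'I_n) (v : 'I_n) (m1 m2 : nat),
    simple_graph e /\ connected_graph e /\ ~ cut_vertex e v /\
    is_chi_dom e m1 /\ is_chi_dom (del_vertex e v) m2 /\
    N <= maxn (m1 - m2) (m2 - m1).
Proof.
pose p := 2 * N + 5.
have p_gt0 : 0 < p by rewrite /p addnS.
have [_ path_irr] := simple_graph_del_vertex ord0 (fan_simple p.+2).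
have [m1 chi_m1 m1_le3] := dominated_coloring_chi_dom (fan_color_dominated p).
have [m2 chi_m2 _] :=
  dominated_coloring_chi_dom (enum_rank_dominated path_irr (path_has_neighbor p_gt0)).
exists p.+2, (@fan p.+2), ord0, m1, m2.
split; first exact: fan_simple.
split; first exact: fan_connected.
split; first exact/not_cut_vertex_of_connected/path_connected.
do 2 (split=> //).
have [[c c_dom] _] := chi_m2.
have := card_le_dominated_coloring (@path_degree_le2 p) c_dom.
by rewrite card_path /p; lia.
Qed.
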